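(* Fix an integer $N\ge 3$. There is a conditional (adaptive) sampling procedure which, knowing only $N$, queries the values $F_{\vec B}(x_1),\dots,F_{\vec B}(x_k)$ of an unknown CDF $F_{\vec B}$ at $k\le\lfloor N/2\rfloor$ points, where each query point $x_j$ is determined by $N$ and the previously obtained values $F_{\vec B}(x_1),\dots,F_{\vec B}(x_{j-1})$, and which, for every binary digit vector $\vec B=(b_0,\dots,b_{N-1})$ with $2\le\|\vec B\|\le N-1$, completely determines $\vec B$ (and hence $F_{\vec B}$) from these values.
   Context: A binary digit vector of length (scale factor) $N\ge3$ is $\vec B=(b_0,\dots,b_{N-1})\in\{0,1\}^N$ with $2\le\|\vec B\|:=\sum_i b_i\le N-1$; its digit set is $D=\{i:b_i=1\}$. With $\phi_d(x)=(x+d)/N$ for $d\in D$, let $\mu_{\vec B}$ be the unique Borel probability measure with $\mu_{\vec B}=\frac{1}{\|\vec B\|}\sum_{d\in D}\mu_{\vec B}\circ\phi_d^{-1}$; it is supported on the attractor $C_{\vec B}\subset[0,1]$ of $\{\phi_d\}_{d\in D}$. The CDF is $F_{\vec B}(x)=\mu_{\vec B}([0,x])$, $x\in[0,1]$. *)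

From HB Require Import structures.
From mathcomp Require Import all_boot all_order all_algebra.
From mathcomp Require Import all_classical all_reals all_analysis.
Set Implicit Arguments. Unset Strict Implicit. Unset Printing Implicit Defensive.
Import Order.TTheory GRing.Theory Num.Theory.
Local Open Scope ring_scope.
Local Open Scope classical_set_scope.

Definition bnorm (N : nat) (B : {ffun 'I_N -> bool}) : nat := (\sum_(i < N) B i)%N.

Definition phi {R : realType} (N d : nat) (x : R) : R := (x + d%:R) / N%:R.

Definition self_similar {R : realType} (N : nat) (B : {ffun 'I_N -> bool})
  (mu : probability R R) : Prop :=
  forall A : set R, measurable A ->
    (mu A = ((bnorm B)%:R^-1)%:E *
           \sum_(d < N | B d) mu (phi N d @^-1` A))%E.

Definition cdf_of {R : realType} (mu : probability R R) (x : R) : R :=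
  fine (mu `[0, x]).

(* Adaptive querying: the strategy q maps the list of previously obtained
   values (F(x_1),...,F(x_{j-1})) to the next query point x_j.
   run q F k = [:: F(x_1); ...; F(x_k)]. *)
Fixpoint run {R : Type} (q : seq R -> R) (F : R -> R) (k : nat) : seq R :=
  match k with
  | 0 => [::]
  | k'.+1 => let s := run q F k' in rcons s (F (q s))
  end.

(* Write n = ||B|| and c_j = b_0 + ... + b_{j-1}.  Self-similarity confines mu
   to [0,1] (the mass outside [-r, 1+r] is at most the mass outside
   [-Nr, 1+Nr]), gives F(0) = 0, and for j < N and 0 <= v <= 1
     F((j + v)/N) = (c_j + b_j F(v)) / n.
   So one query in [2m/N, (2m+2)/N] reveals the two digits b_{2m}, b_{2m+1}.
   Once a digit 1 has been read, n is known, and F at (2m + 1 + 2m/N)/N is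
   (c + b_{2m} + b_{2m+1} c/n)/n with c = c_{2m} and 0 < c/n < 1, which separates
   the four cases.  While all digits read are 0, F at the N-th iterate of
   x |-> (2m + 1 + x)/N started at (2m + 2)/N depends only on
   (b_{2m}, b_{2m+1}, n), and injectively: it is 1/n, or n^(-N-1) < 1/N, or
   lies strictly between 1/(n-1) and 1/(n-2) (it is 1 for n = 2); so n is
   read as well.  After floor(N/2) queries only b_{N-1} may be missing (N odd),
   and it is determined by n. *)

From HB Require Import structures.
From mathcomp Require Import all_boot all_order all_algebra.
From mathcomp Require Import all_classical all_reals all_analysis.
From mathcomp Require Import measurable_realfun.
From mathcomp Require Import ring lra.
Set Implicit Arguments.
Unset Strict Implicit.
Unset Printing Implicit Defensive.

Import Order.TTheory GRing.Theory Num.Theory.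
Local Open Scope ring_scope.
Local Open Scope classical_set_scope.

Section Digits.
Variables (N : nat) (B : {ffun 'I_N -> bool}).

Definition digit (j : nat) : bool := oapp B false (insub j).

Definition ones (j : nat) : nat := count digit (iota 0 j).

Lemma digit_ord (i : 'I_N) : digit i = B i.
Proof. by rewrite /digit valK. Qed.

Lemma onesS j : ones j.+1 = (ones j + digit j)%N.
Proof. by rewrite /ones -addn1 iotaD count_cat /= addn0. Qed.

Lemma leq_ones : {homo ones : j k / (j <= k)%N}.
Proof.
move=> j k /subnK <-; elim: (k - j)%N => [|t IH] //.
by rewrite addSn onesS (leq_trans IH) ?leq_addr.
Qed.

Lemma sum_digits_eq (R : pzSemiRingType) (y : R) j :
  \sum_(d < N | B d) (if d == j :> nat then y else 0) = (digit j)%:R * y.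
Proof.
case: (ltnP j N) => [jN|Nj].
  rewrite big_mkcond (bigD1 (Ordinal jN)) //= eqxx big1 ?addr0 => [|d dj].
    by rewrite -digit_ord; case: digit; rewrite ?mul1r ?mul0r.
  have /negbTE -> : d != j :> nat by apply: contra dj => /eqP ?; apply/eqP/val_inj.
  by rewrite if_same.
rewrite big1 => [|d _]; last by rewrite ifN // neq_ltn (leq_trans (ltn_ord d)).
by rewrite /digit insubF ?mul0r // ltnNge Nj.
Qed.

Lemma sum_digits_lt (R : pzSemiRingType) j :
  \sum_(d < N | B d) (if (d < j)%N then 1 else 0) = (ones j)%:R :> R.
Proof.
elim: j => [|j IH]; first by rewrite big1.
rewrite onesS natrD -IH -[(digit j)%:R]mulr1 -sum_digits_eq -big_split /=.
by apply: eq_bigr => d _; rewrite ltnS; case: ltngtP; rewrite ?addr0 ?add0r.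
Qed.

Lemma bnorm_ones : bnorm B = ones N.
Proof.
rewrite -[ones N]natn -sum_digits_lt /bnorm [RHS]big_mkcond.
by apply: eq_bigr => d _; rewrite ltn_ord; case: (B d).
Qed.

Lemma sum_digits_const (R : pzSemiRingType) (c : R) :
  \sum_(d < N | B d) c = (bnorm B)%:R * c.
Proof.
rewrite bnorm_ones -sum_digits_lt mulr_suml.
by apply: eq_bigr => d _; rewrite ltn_ord mul1r.
Qed.

End Digits.

Section FreshValue.
Variable R : realFieldType.

(* The value of F at [fresh_point m i] when b_0 = ... = b_{2m-1} = 0 and
   (b_{2m}, b_{2m+1}) = (a, b): see [cdf_fresh_point]. *)
Fixpoint fresh_value (a b : bool) (n i : nat) : R :=
  if i is i'.+1 then (a%:R + b%:R * fresh_value a b n i') / n%:R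
  else (a%:R + b%:R) / n%:R.

Lemma fresh_value_ge0 a b n i : 0 <= fresh_value a b n i.
Proof.
by elim: i => [|i IH] /=; rewrite divr_ge0 ?addr_ge0 ?mulr_ge0 ?ler0n.
Qed.

Lemma fresh_value00 n i : fresh_value false false n i = 0.
Proof. by elim: i => [|i IH] /=; rewrite ?IH ?mulr0n ?mul0r ?add0r ?mul0r. Qed.

Lemma fresh_value10 n i : fresh_value true false n i = n%:R^-1.
Proof. by elim: i => [|i IH] /=; rewrite ?mulr0n ?mulr1n ?mul0r addr0 mul1r. Qed.

Lemma fresh_value01 n i : fresh_value false true n i = (n%:R ^+ i.+1)^-1.
Proof.
elim: i => [|i IH] /=; rewrite ?mulr0n ?mulr1n; first by rewrite add0r mul1r expr1.
by rewrite IH add0r mul1r -invfM -exprSr.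
Qed.

Lemma fresh_value_true_ge b n i : n%:R^-1 <= fresh_value true b n i.
Proof.
rewrite -[X in X <= _]mul1r; case: i => [|i] /=;
  rewrite ler_wpM2r ?invr_ge0 ?ler0n // mulr1n lerDl //.
by rewrite mulr_ge0 ?ler0n ?fresh_value_ge0.
Qed.

Lemma fresh_value_gt0 a b n i : (0 < n)%N -> a || b -> 0 < fresh_value a b n i.
Proof.
move=> n_gt0; have n_gt0' : 0 < n%:R :> R by rewrite ltr0n.
case: a => /= [_ | ->]; last by rewrite fresh_value01 invr_gt0 exprn_gt0.
by apply: lt_le_trans (fresh_value_true_ge b n i); rewrite invr_gt0.
Qed.

Lemma fresh_value11_2 i : fresh_value true true 2 i = 1.
Proof. by elim: i => [|i IH] /=; rewrite ?IH ?mul1r -mulr2n divff ?pnatr_eq0. Qed.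

Lemma ltr_fresh_value11 n1 n2 i : (0 < n1)%N -> (n1 < n2)%N ->
  fresh_value true true n2 i < fresh_value true true n1 i.
Proof.
move=> n1_gt0 n12; have n1_gt0' : 0 < n1%:R :> R by rewrite ltr0n.
have inv_lt : n2%:R^-1 < n1%:R^-1 :> R by rewrite ltf_pV2 ?posrE ?ltr_nat // ltr0n (ltn_trans _ n12).
elim: i => [|i IH] /=; first by rewrite ltr_pM2l // -natrD ltr0n.
apply: (@lt_le_trans _ _ ((1 + fresh_value true true n1 i) / n2%:R)).
  by rewrite mul1r ltr_pM2r ?invr_gt0 ?ltr0n ?(ltn_trans _ n12) // ltrD2l.
by rewrite mul1r ler_pM2l ?ltW // ltr_pwDl ?fresh_value_ge0.
Qed.

Lemma fresh_value11_le n i : (2 <= n)%N -> fresh_value true true n i <= 2 / n%:R.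
Proof.
move=> n_ge2; have n_ge2' : 2 <= n%:R :> R by rewrite ler_nat.
have n_gt0 : 0 < n%:R :> R by lra.
elim: i => [|i IH] /=; first by rewrite -mulr2n.
rewrite mul1r ler_pM2r ?invr_gt0 //.
have : 2 / n%:R <= 1 :> R by rewrite ler_pdivrMr // mul1r.
lra.
Qed.

Lemma fresh_value11_gt n i : (3 <= n)%N -> 1 < (n%:R - 1) * fresh_value true true n i.
Proof.
move=> n_ge3; have n_ge3' : 3 <= n%:R :> R by rewrite ler_nat.
have n_gt0 : 0 < n%:R :> R by lra.
elim: i => [|i IH] /=; rewrite ?mul1r mulrA ltr_pdivlMr // mul1r; nra.
Qed.

Lemma fresh_value11_lt n i : (3 <= n)%N -> (n%:R - 2) * fresh_value true true n i.+1 < 1.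
Proof.
move=> n_ge3; have n_ge3' : 3 <= n%:R :> R by rewrite ler_nat.
have n_gt0 : 0 < n%:R :> R by lra.
have := fresh_value11_le i (leq_trans (isT : (2 <= 3)%N) n_ge3).
have t_n : 2 / n%:R * n%:R = 2 :> R by rewrite divfK ?lt0r_neq0.
have t_gt0 : 0 < 2 / n%:R :> R by rewrite divr_gt0.
rewrite /= mul1r mulrA ltr_pdivrMr // mul1r.
move: t_n t_gt0; set t := 2 / n%:R => *; nra.
Qed.

Lemma fresh_value11_neq_inv n1 n2 i : (2 <= n1)%N -> (1 < n2)%N ->
  fresh_value true true n1 i.+1 != n2%:R^-1.
Proof.
move=> n1_ge2 n2_gt1; apply/eqP => c_eq.
have n2_ge2 : 2 <= n2%:R :> R by rewrite ler_nat.
have n2_gt0 : 0 < n2%:R :> R by lra.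
case: (ltngtP n1 2) => [|n1_gt2|n1_eq2]; first by rewrite ltnNge n1_ge2.
  have lo := fresh_value11_gt i.+1 n1_gt2; have hi := fresh_value11_lt i n1_gt2.
  move: lo hi; rewrite c_eq ltr_pdivlMr // ltr_pdivrMr // !mul1r => lo hi.
  have lt21 : (n2.+1 < n1)%N by rewrite -(ltr_nat R) -natr1; lra.
  have lt12 : (n1 < n2.+2)%N by rewrite -(ltr_nat R) -addn2 natrD; lra.
  by have := leq_trans lt12 lt21; rewrite ltnn.
have : n2%:R^-1 <= 2^-1 :> R by rewrite lef_pV2 ?posrE; lra.
by rewrite -c_eq n1_eq2 fresh_value11_2; lra.
Qed.

Lemma fresh_value_inj (N : nat) a1 b1 n1 a2 b2 n2 i :
  a1 || b1 -> a2 || b2 -> (2 <= n1 < N)%N -> (2 <= n2 < N)%N -> (N <= i)%N ->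
  fresh_value a1 b1 n1 i = fresh_value a2 b2 n2 i -> (a1, b1, n1) = (a2, b2, n2).
Proof.
move=> ab1 ab2 n1_rng n2_rng Ni.
have /andP [n1_ge2 n1_lt] := n1_rng; have /andP [n2_ge2 n2_lt] := n2_rng.
have N_gt0 : (0 < N)%N by rewrite (leq_trans _ n1_lt).
have sep b n n' : (2 <= n < N)%N -> (2 <= n')%N ->
    fresh_value true b n i != fresh_value false true n' i.
  case/andP=> n_ge2 n_lt n'_ge2; apply/negbT/gt_eqF/(@lt_trans _ _ N%:R^-1).
    rewrite fresh_value01 ltf_pV2 ?posrE ?exprn_gt0 ?ltr0n ?(leq_trans _ n'_ge2) //.
    by rewrite -natrX ltr_nat (leq_ltn_trans Ni) // (ltn_trans _ (ltn_expl i.+1 n'_ge2)).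
  apply: lt_le_trans (fresh_value_true_ge b n i).
  by rewrite ltf_pV2 ?posrE ?ltr0n ?ltr_nat ?(leq_trans _ n_ge2).
case: i Ni sep => [|i] Ni sep; first by move: (leq_trans N_gt0 Ni).
case: a1 b1 ab1 => [] [] // _; case: a2 b2 ab2 => [] [] // _ eq12.
- have [n12|n21|->] // := ltngtP n1 n2.
    by have := ltr_fresh_value11 i.+1 (ltnW n1_ge2) n12; rewrite eq12 ltxx.
  by have := ltr_fresh_value11 i.+1 (ltnW n2_ge2) n21; rewrite eq12 ltxx.
- by move/eqP: (fresh_value11_neq_inv i n1_ge2 n2_ge2); rewrite eq12 fresh_value10.
- by move/eqP: (sep true n1 n2 n1_rng n2_ge2).
- by move/eqP: (fresh_value11_neq_inv i n2_ge2 n1_ge2); rewrite -eq12 fresh_value10.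
- by move: eq12; rewrite !fresh_value10 => /invr_inj/eqP; rewrite eqr_nat => /eqP ->.
- by move/eqP: (sep false n1 n2 n1_rng n2_ge2).
- by move/eqP: (sep true n2 n1 n2_rng n1_ge2); rewrite eq12.
- by move/eqP: (sep false n2 n1 n2_rng n1_ge2); rewrite eq12.
- move: eq12; rewrite !fresh_value01 => /invr_inj/eqP; rewrite -!natrX eqr_nat.
  by rewrite eqn_exp2r // => /eqP ->.
Qed.

End FreshValue.

Section Strategy.
Variables (R : realFieldType) (N : nat).

Fixpoint fresh_point (m i : nat) : R :=
  if i is i'.+1 then ((m.*2.+1)%:R + fresh_point m i') / N%:R
  else (m.*2.+2)%:R / N%:R.

Definition known_point (m : nat) : R := ((m.*2.+1)%:R + (m.*2)%:R / N%:R) / N%:R.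

(* The digits read so far, and ||B|| once a digit 1 has been read. *)
Definition state := (seq bool * option nat)%type.

Definition step (st : state) (y : R) : state :=
  let: (s, norm) := st in
  if norm is Some n then
    let e := n%:R * y - (count id s)%:R in
    let: (a, b) := if e == 0 then (false, false) else if e == 1 then (true, false)
                   else if e < 1 then (false, true) else (true, true) in
    (s ++ [:: a; b], Some n)
  else if y == 0 then (s ++ [:: false; false], None)
  else if [pick t : bool * bool * 'I_N | (2 <= t.2)%N && (y == fresh_value R t.1.1 t.1.2 t.2 N)]
         is Some (a, b, n) then (s ++ [:: a; b], Some (val n))
       else st.

Definition decode (ys : seq R) : state := foldl step ([::], None) ys.

Definition next_point (st : state) : R :=
  if st.2 is Some _ then known_point (size st.1)./2 else fresh_point (size st.1)./2 N.

(* Clamped so as to stay in [0, 1] on every input; on the values of a CDF the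
   clamp is inactive (see [next_point_expected_in01]). *)
Definition query (ys : seq R) : R := Num.min 1 (Num.max 0 (next_point (decode ys))).

(* The only digit that may not have been read, b_{N-1} for odd N, is the one
   that brings the number of ones to ||B||. *)
Definition decoded_digits (ys : seq R) : {ffun 'I_N -> bool} :=
  let: (s, norm) := decode ys in
  [ffun i : 'I_N => nth (if norm is Some n then (count id s < n)%N else false) s i].

Lemma fresh_point_in01 m i : (m.*2.+2 <= N)%N -> 0 <= fresh_point m i <= 1.
Proof.
move=> mN; have N_gt0 : 0 < N%:R :> R by rewrite ltr0n (leq_trans _ mN).
have mN' : (m.*2.+1)%:R + 1 <= N%:R :> R by rewrite natr1 ler_nat.
elim: i => [|i /andP [IH0 IH1]] /=; rewrite divr_ge0 ?ler0n ?addr_ge0 //= ler_pdivrMr // mul1r.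
  by rewrite ler_nat.
have : 0 <= (m.*2.+1)%:R :> R by rewrite ler0n.
lra.
Qed.

Lemma known_point_in01 m : (m.*2.+2 <= N)%N -> 0 <= known_point m <= 1.
Proof.
move=> mN; have N_gt0 : 0 < N%:R :> R by rewrite ltr0n (leq_trans _ mN).
have mN' : (m.*2.+1)%:R + 1 <= N%:R :> R by rewrite natr1 ler_nat.
have v_le1 : (m.*2)%:R / N%:R <= 1 :> R.
  by rewrite ler_pdivrMr // mul1r ler_nat; apply: leq_trans (leqnSn _) (ltnW mN).
have v_ge0 : 0 <= (m.*2)%:R / N%:R :> R by rewrite divr_ge0 ?ler0n.
rewrite divr_ge0 ?addr_ge0 ?ler0n //= ler_pdivrMr // mul1r.
lra.
Qed.

Lemma decode_rcons ys y : decode (rcons ys y) = step (decode ys) y.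
Proof. by rewrite /decode foldl_rcons. Qed.

Lemma query_in01 ys : query ys \in `[0, 1].
Proof. by rewrite in_setE /= in_itv /= le_min ge_min le_max !lexx ler01. Qed.

Lemma step_fresh s a b n : (2 <= n < N)%N ->
  step (s, None) (fresh_value R a b n N) = (s ++ [:: a; b], if a || b then Some n else None).
Proof.
move=> n_rng; have /andP [n_ge2 n_lt] := n_rng.
rewrite /step; case: (boolP (a || b)) => ab /=; last first.
  by move: ab; case: a; case: b => // _; rewrite fresh_value00 eqxx.
have y_gt0 := fresh_value_gt0 R N (ltnW n_ge2) ab.
rewrite gt_eqF //; case: pickP => [[[a' b'] n'] /= /andP [n'_ge2 /eqP eq_ab] | none]; last first.
  by have := none (a, b, Ordinal n_lt); rewrite /= n_ge2 eqxx.
have ab' : a' || b'.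
  by move: eq_ab y_gt0; case: a'; case: b' => //= ->; rewrite fresh_value00 ltxx.
have n'_rng : (2 <= n' < N)%N by rewrite n'_ge2 ltn_ord.
by case: (fresh_value_inj ab ab' n_rng n'_rng (leqnn N) eq_ab) => <- <- <-.
Qed.

Lemma step_known s n (a b : bool) : let c := count id s in (0 < c)%N -> (c + a + b <= n)%N ->
  step (s, Some n) ((c%:R + a%:R + b%:R * (c%:R / n%:R)) / n%:R) = (s ++ [:: a; b], Some n).
Proof.
move=> c c_gt0 cab; have c_gt0' : 0 < c%:R :> R by rewrite ltr0n.
have n_gt0 : 0 < n%:R :> R by rewrite ltr0n (leq_trans c_gt0) // (leq_trans _ cab) // -addnA leq_addr.
rewrite /step -/c.
have -> : n%:R * ((c%:R + a%:R + b%:R * (c%:R / n%:R)) / n%:R) - c%:R =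
    a%:R + b%:R * (c%:R / n%:R) :> R by field; rewrite lt0r_neq0.
have r_gt0 : 0 < c%:R / n%:R :> R by rewrite divr_gt0.
have r_lt1 : b -> c%:R / n%:R < 1 :> R.
  move=> bT; rewrite ltr_pdivrMr // mul1r ltr_nat (leq_trans _ cab) //.
  by rewrite bT addn1 ltnS leq_addr.
case: a b cab r_lt1 => [] [] /= cab r_lt1; rewrite ?mul1r ?mul0r ?addr0 ?add0r.
- rewrite ifF; last by apply/negbTE/eqP => h; lra.
  rewrite ifF; last by apply/negbTE/eqP => h; lra.
  by rewrite ifF //; apply/negbTE; rewrite -leNgt; lra.
- by rewrite oner_eq0 eqxx.
- have r_lt1' := r_lt1 isT.
  rewrite ifF; last by apply/negbTE/eqP => h; lra.
  by rewrite ifF ?r_lt1' //; apply/negbTE/eqP => h; lra.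
- by rewrite eqxx.
Qed.

End Strategy.

Arguments step : simpl never.

Lemma measurable_phi (R : realType) (N d : nat) : measurable_fun setT (@phi R N d).
Proof. by apply: measurable_funM => //; apply: measurable_funD. Qed.

Lemma preimage_phi_itv (R : realType) (N d : nat) (a b : R) : (0 < N)%N ->
  phi N d @^-1` `[a, b] = `[N%:R * a - d%:R, N%:R * b - d%:R].
Proof.
move=> N_gt0; have N0 : 0 < N%:R :> R by rewrite ltr0n.
apply/seteqP; split => x /=; rewrite /phi !in_itv /=;
  rewrite ler_pdivlMr // ler_pdivrMr // => /andP [h1 h2]; apply/andP; split; lra.
Qed.

Section SelfSimilarCdf.
Variables (R : realType) (N : nat) (B : {ffun 'I_N -> bool}) (mu : probability R R).
Hypotheses (N_gt1 : (1 < N)%N) (B_ge2 : (2 <= bnorm B)%N) (mu_ss : self_similar B mu).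

Local Notation n := (bnorm B).
Local Notation F := (cdf_of mu).

Definition mass (A : set R) : R := fine (mu A).

Lemma measure_mass A : measurable A -> mu A = (mass A)%:E.
Proof. by move=> mA; rewrite /mass fineK // fin_num_measure. Qed.

Lemma mass_ge0 A : 0 <= mass A.
Proof. by rewrite /mass fine_ge0. Qed.

Lemma le_mass A C : measurable A -> measurable C -> A `<=` C -> mass A <= mass C.
Proof.
by move=> mA mC AC; rewrite -lee_fin -!measure_mass //; apply: le_measure; rewrite ?inE.
Qed.

Lemma mass_setT : mass setT = 1.
Proof. by rewrite /mass probability_setT. Qed.

Lemma mass_set0 : mass set0 = 0.
Proof. by rewrite /mass measure0. Qed.

Lemma N_gt0 : 0 < N%:R :> R.
Proof. by rewrite ltr0n (ltnW N_gt1). Qed.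

Lemma bnorm_gt0 : 0 < n%:R :> R.
Proof. by rewrite ltr0n (leq_trans _ B_ge2). Qed.

Lemma mass_self_similar A : measurable A ->
  mass A = n%:R^-1 * \sum_(d < N | B d) mass (phi N d @^-1` A).
Proof.
move=> mA; have := mu_ss mA; rewrite measure_mass //.
have mphi (d : 'I_N) : measurable (phi N d @^-1` A).
  by rewrite -[_ @^-1` _]setTI; apply: measurable_phi.
under eq_bigr do rewrite measure_mass //.
by rewrite sumEFin -EFinM => -[].
Qed.

Definition outside (r : R) : set R := ~` `[- r, 1 + r].

Lemma measurable_outside r : measurable (outside r).
Proof. by apply: measurableC; apply: measurable_itv. Qed.

Lemma mass_outside_scale r : mass (outside r) <= mass (outside (N%:R * r)).
Proof.
rewrite mass_self_similar; last exact: measurable_outside.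
apply: (@le_trans _ _ (n%:R^-1 * \sum_(d < N | B d) mass (outside (N%:R * r)))); last first.
  by rewrite sum_digits_const mulKf ?lt0r_neq0 ?bnorm_gt0.
rewrite ler_wpM2l ?invr_ge0 ?ler0n // ler_sum // => d _.
have -> : phi N d @^-1` outside r =
    ~` `[N%:R * - r - (d : nat)%:R, N%:R * (1 + r) - (d : nat)%:R].
  by rewrite /outside -preimage_setC (preimage_phi_itv _ _ _ (ltnW N_gt1)).
apply: le_mass; [by apply: measurableC; apply: measurable_itv | exact: measurable_outside |].
apply: subsetC => y /=; rewrite !in_itv /= => /andP [h1 h2].
have hd : (d : nat)%:R + 1 <= N%:R :> R by rewrite natr1 ler_nat.
have hd0 : 0 <= (d : nat)%:R :> R by rewrite ler0n.
by apply/andP; split; lra.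
Qed.

Lemma outside_le r s : r <= s -> outside s `<=` outside r.
Proof.
move=> rs; apply: subsetC => y /=; rewrite !in_itv /= => /andP [h1 h2].
by apply/andP; split; lra.
Qed.

Lemma mass_outside r : 0 < r -> mass (outside r) = 0.
Proof.
move=> r_gt0; pose G k := outside (N%:R ^+ k * r).
have le_G k : mass (outside r) <= mass (G k).
  elim: k => [|k IH]; first by rewrite /G expr0 mul1r.
  by apply: (le_trans IH); rewrite /G exprS -mulrA; apply: mass_outside_scale.
have G_dec : nonincreasing_seq G.
  apply/nonincreasing_seqP => k; apply/subsetPset; apply: outside_le.
  rewrite exprS -mulrA ler_peMl ?mulr_ge0 ?exprn_ge0 ?ler0n ?(ltW r_gt0) //.
  by rewrite ler1n (ltnW N_gt1).
have G_cap : \bigcap_k G k = set0.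
  apply/seteqP; split => // x /= xG.
  pose k := (Num.truncn (`|x| / r)).+1.
  have x_lt : `|x| < N%:R ^+ k * r.
    rewrite -ltr_pdivrMr // (lt_trans (truncnS_gt _)) // -natrX ltr_nat.
    exact: ltn_expl.
  apply: (xG k I); rewrite /= in_itv /=.
  by move: x_lt; rewrite ltr_norml => /andP [? ?]; apply/andP; split; lra.
have G_cvg : mu \o G @ \oo --> mu (\bigcap_k G k).
  apply: nonincreasing_cvg_mu => //; rewrite ?G_cap //.
    exact: le_lt_trans (probability_le1 _ (measurable_outside _)) (ltry _).
  by move=> k; apply: measurable_outside.
rewrite G_cap measure0 in G_cvg.
have : ((mass (outside r))%:E <= 0)%E.
  apply: (cvge_to_ge G_cvg); apply: nearW => k /=.
  by rewrite measure_mass ?lee_fin ?le_G //; apply: measurable_outside.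
by rewrite lee_fin => h; apply/eqP; rewrite eq_le h mass_ge0.
Qed.

Lemma measure_setC_unit : mu (~` `[0, 1]) = 0%E.
Proof.
have mC : measurable (~` `[0, 1] : set R) by apply: measurableC; apply: measurable_itv.
have cover : ~` `[0, 1] `<=` \bigcup_k outside (k.+1%:R^-1 : R).
  move=> x /=; rewrite in_itv /= => /negP; rewrite negb_and -!ltNge => /orP[x_lt0|x_gt1].
    have [k] := ltr_add_invr x_lt0; set e := _^-1 => xk.
    by exists k => //; rewrite /outside /= in_itv /= -/e => /andP [? ?]; lra.
  have [k] := ltr_add_invr x_gt1; set e := _^-1 => xk.
  by exists k => //; rewrite /outside /= in_itv /= -/e => /andP [? ?]; lra.
apply/(negligibleP _ mC)/(negligibleS cover)/negligible_bigcup => k.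
apply/negligibleP; first exact: measurable_outside.
have := measure_mass (measurable_outside (k.+1%:R^-1 : R)).
by rewrite mass_outside // invr_gt0 ltr0n.
Qed.

Lemma mass_setI_unit (X : set R) : measurable X -> mass X = mass (X `&` `[0, 1]).
Proof.
move=> mX; have mI : measurable (`[0, 1] : set R) by apply: measurable_itv.
rewrite /mass (measureDI mu mX mI) (@subset_measure0 _ _ _ mu _ (~` `[0, 1])) ?add0e //.
- exact: measurableD.
- exact: measurableC.
- exact: measure_setC_unit.
Qed.

Lemma mass_eq_on_unit (X Y : set R) : measurable X -> measurable Y ->
  X `&` `[0, 1] = Y `&` `[0, 1] -> mass X = mass Y.
Proof. by move=> mX mY XY; rewrite mass_setI_unit // XY -mass_setI_unit. Qed.

Lemma mass_unit : mass `[0, 1] = 1.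
Proof.
rewrite -[RHS]mass_setT; apply: mass_eq_on_unit; first exact: measurable_itv.
  exact: measurableT.
by rewrite setTI setIid.
Qed.

Lemma cdfE x : F x = mass `[0, x].
Proof. by []. Qed.

Lemma cdf_self_similar x :
  F x = n%:R^-1 * \sum_(d < N | B d) mass `[- (d : nat)%:R, N%:R * x - (d : nat)%:R].
Proof.
rewrite cdfE mass_self_similar; last exact: measurable_itv.
by under eq_bigr do rewrite (preimage_phi_itv _ _ _ (ltnW N_gt1)) mulr0 sub0r.
Qed.

Lemma cdf0 : F 0 = 0.
Proof.
have F0E : F 0 = n%:R^-1 * (digit B 0)%:R * F 0.
  rewrite -mulrA {1}cdf_self_similar -sum_digits_eq; congr (_ * _).
  apply: eq_bigr => d _; rewrite mulr0 sub0r.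
  case: eqP => [-> | /eqP d_neq0]; first by rewrite oppr0.
  rewrite -[RHS]mass_set0; apply: mass_eq_on_unit; first exact: measurable_itv.
    exact: measurable0.
  rewrite set0I; apply/seteqP; split => // x /= [].
  rewrite !in_itv /= => /andP [? ?] /andP [? ?].
  have : 0 < (d : nat)%:R :> R by rewrite ltr0n lt0n.
  lra.
have c_le : n%:R^-1 * (digit B 0)%:R <= 2^-1 :> R.
  rewrite (@le_trans _ _ n%:R^-1) //.
    by rewrite ler_piMr ?invr_ge0 ?ler0n // lern1 leq_b1.
  by rewrite lef_pV2 ?posrE ?bnorm_gt0 // ler_nat.
have F0_ge0 : 0 <= F 0 by apply: mass_ge0.
have : F 0 <= 2^-1 * F 0 by rewrite {1}F0E ler_wpM2r.
lra.
Qed.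

Lemma cdf_digit j v : (j < N)%N -> 0 <= v <= 1 ->
  F ((j%:R + v) / N%:R) = ((ones B j)%:R + (digit B j)%:R * F v) / n%:R.
Proof.
move=> jN /andP [v_ge0 v_le1]; rewrite cdf_self_similar mulrC; congr (_ * _).
have -> : N%:R * ((j%:R + v) / N%:R) = j%:R + v by rewrite mulrC divfK ?lt0r_neq0 ?N_gt0.
rewrite -sum_digits_lt -sum_digits_eq -big_split /=; apply: eq_bigr => d _.
have d_ge0 : 0 <= (d : nat)%:R :> R by rewrite ler0n.
have mX : measurable `[- (d : nat)%:R, j%:R + v - (d : nat)%:R] by apply: measurable_itv.
case: ltngtP => [dj|jd|dj]; rewrite ?addr0 ?add0r.
- have : (d : nat)%:R + 1 <= j%:R :> R by rewrite natr1 ler_nat.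
  move=> dj'; rewrite -[RHS]mass_setT; apply: mass_eq_on_unit => //.
  rewrite setTI; apply/setIidr => x /=; rewrite !in_itv /= => /andP [? ?].
  by apply/andP; split; lra.
- have : j%:R + 1 <= (d : nat)%:R :> R by rewrite natr1 ler_nat.
  move=> jd'; apply/eqP; rewrite eq_le mass_ge0 andbT -cdf0 cdfE mass_setI_unit //.
  apply: le_mass; [by apply: measurableI => //; apply: measurable_itv | exact: measurable_itv |].
  move=> x /= []; rewrite !in_itv /= => /andP [? ?] /andP [? ?].
  by apply/andP; split; lra.
- have j_ge0 : 0 <= j%:R :> R by rewrite ler0n.
  rewrite cdfE dj addrAC subrr add0r.
  apply: mass_eq_on_unit; [exact: measurable_itv | exact: measurable_itv |].
  apply/seteqP; split => x [x1 x2]; split => //; move: x1 x2;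
    by rewrite /= !in_itv /= => /andP [? ?] /andP [? ?]; apply/andP; split; lra.
Qed.

Lemma cdf_grid j : (j <= N)%N -> F (j%:R / N%:R) = (ones B j)%:R / n%:R.
Proof.
rewrite leq_eqVlt => /orP [/eqP -> | jN].
  by rewrite -bnorm_ones !divff ?lt0r_neq0 ?N_gt0 ?bnorm_gt0 // cdfE mass_unit.
by rewrite -[j%:R]addr0 cdf_digit // ?cdf0 ?mulr0 ?addr0 // lexx ler01.
Qed.

Hypothesis B_ltN : (bnorm B < N)%N.

Definition expected_state (m : nat) : state :=
  ([seq digit B i | i <- iota 0 m.*2], if ones B m.*2 == 0%N then None else Some n).

Lemma expected_stateS m : expected_state m.+1 =
  ((expected_state m).1 ++ [:: digit B m.*2; digit B m.*2.+1],
   if (ones B m.*2 + digit B m.*2 + digit B m.*2.+1 == 0)%N then None else Some n).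
Proof. by rewrite /expected_state doubleS !onesS -addn2 iotaD map_cat. Qed.

Lemma cdf_fresh_point m i : (m.*2.+2 <= N)%N -> ones B m.*2 = 0%N ->
  F (fresh_point R N m i) = fresh_value R (digit B m.*2) (digit B m.*2.+1) n i.
Proof.
move=> mN ones0; elim: i => [|i IH] /=.
  by rewrite cdf_grid // !onesS ones0 add0n natrD.
by rewrite cdf_digit // ?fresh_point_in01 // IH onesS ones0 add0n.
Qed.

Lemma cdf_known_point m : (m.*2.+2 <= N)%N -> F (known_point R N m) =
  ((ones B m.*2)%:R + (digit B m.*2)%:R + (digit B m.*2.+1)%:R * ((ones B m.*2)%:R / n%:R)) / n%:R.
Proof.
move=> mN; have m2N : (m.*2 <= N)%N by apply: leq_trans (leqnSn _) (ltnW mN).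
rewrite /known_point cdf_digit // ?cdf_grid ?onesS ?natrD //.
by rewrite divr_ge0 ?ler0n //= ler_pdivrMr ?N_gt0 // mul1r ler_nat.
Qed.

Lemma step_expected m : (m < N./2)%N ->
  step N (expected_state m) (F (next_point R N (expected_state m))) = expected_state m.+1.
Proof.
move=> m_lt; have mN : (m.*2.+2 <= N)%N by rewrite -doubleS -geq_half_double.
have count_ones : count id [seq digit B i | i <- iota 0 m.*2] = ones B m.*2 by rewrite count_map.
rewrite expected_stateS /expected_state /next_point /= size_map size_iota half_double.
case: eqP => [ones0 | /eqP ones_neq0].
  rewrite cdf_fresh_point // ones0 add0n step_fresh ?B_ge2 ?B_ltN //.
  by case: (digit B m.*2); case: (digit B m.*2.+1).
rewrite !addn_eq0 (negbTE ones_neq0) cdf_known_point // -count_ones step_known //.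
  by rewrite count_ones lt0n.
by rewrite count_ones -!onesS bnorm_ones leq_ones.
Qed.

Lemma next_point_expected_in01 m : (m < N./2)%N ->
  0 <= next_point R N (expected_state m) <= 1.
Proof.
move=> m_lt; have mN : (m.*2.+2 <= N)%N by rewrite -doubleS -geq_half_double.
rewrite /next_point /= size_map size_iota half_double.
by case: (_ == _); [apply: fresh_point_in01 | apply: known_point_in01].
Qed.

Lemma decode_run_query k : (k <= N./2)%N ->
  decode N (run (query N) F k) = expected_state k.
Proof.
elim: k => [|k IH] k_le; first by rewrite /expected_state.
rewrite /= decode_rcons /query IH ?(ltnW k_le) //.
have /andP [? ?] := next_point_expected_in01 k_le.
by rewrite (max_idPr _) // (min_idPr _) // step_expected.
Qed.

Lemma decoded_digits_run_query : decoded_digits N (run (query N) F N./2) = B.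
Proof.
rewrite /decoded_digits decode_run_query // /expected_state.
set k := N./2; have N_split : (odd N + k.*2)%N = N := odd_double_half N.
have n_le : (n <= ones B k.*2 + 1)%N.
  rewrite bnorm_ones -[X in ones B X]N_split addnC.
  by case: (odd N) => /=; [rewrite addn1 onesS leq_add2l leq_b1 | rewrite addn0 leq_addr].
have ones_neq0 : ones B k.*2 != 0%N.
  by apply: (contraTneq _ n_le) => ->; rewrite -ltnNge add0n.
rewrite (negbTE ones_neq0) /=; apply/ffunP => i; rewrite ffunE.
case: (ltnP i k.*2) => [i_lt | i_ge].
  by rewrite (nth_map 0%N) ?size_iota // nth_iota // digit_ord.
have i_lt : (i < k.*2.+1)%N.
  by apply: leq_trans (ltn_ord i) _; rewrite -N_split addnC -addn1 leq_add2l leq_b1.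
have i_eq : (i : nat) = k.*2 by apply/eqP; rewrite eqn_leq i_ge andbT -ltnS.
have N_eq : N = k.*2.+1.
  by move: (ltn_ord i); rewrite i_eq -N_split; case: (odd N); rewrite ?addn0 ?ltnn.
rewrite nth_default ?size_map ?size_iota // count_map -/(ones B k.*2).
have -> : n = (ones B k.*2 + digit B k.*2)%N by rewrite -onesS -N_eq bnorm_ones.
rewrite -digit_ord i_eq.
by rewrite -{1}[ones B k.*2]addn0 ltn_add2l lt0b.
Qed.

End SelfSimilarCdf.

Theorem theorem2p2 (R : realType) (N : nat) (hN : (3 <= N)%N) :
  exists (k : nat) (q : seq R -> R) (dec : seq R -> {ffun 'I_N -> bool}),
    (k <= N./2)%N /\
    (forall s : seq R, q s \in `[0, 1]) /\
    forall (B : {ffun 'I_N -> bool}), (2 <= bnorm B <= N.-1)%N ->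
      forall mu : probability R R, self_similar B mu ->
        dec (run q (cdf_of mu) k) = B.
Proof.
exists N./2, (query N), (decoded_digits N); split => //; split; first exact: query_in01.
move=> B /andP [B_ge2 B_le] mu mu_ss.
have B_ltN : (bnorm B < N)%N by apply: leq_ltn_trans B_le _; rewrite ltn_predL (ltn_trans _ hN).
exact: decoded_digits_run_query (ltnW hN) B_ge2 mu_ss B_ltN.
Qed.
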